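(* Under the standing setup with $\gamma>0$ and $s_1=\dots=s_n=0$ (so Georgia's strategy set is $\{0\}$ and Hank's is $[0,1]$), define $\tilde q(0,0)=\beta-\beta\lambda-\chi\gamma$, $\tilde q(0,1)=(\gamma-\chi)\gamma+(\beta-2\gamma)(1-\lambda)$ and $\tilde r(0)=\frac{1-\lambda-\sqrt{(1-\lambda)(1-\lambda-\beta)+\chi\gamma}}{\gamma}$. Then the Nash equilibrium of the zero-sum game (Georgia minimizing $f$, Hank maximizing $f$) is $(0,1)$ if $\tilde q(0,1)\ge0$; $(0,0)$ if $\tilde q(0,0)\le0$; and $(0,\tilde r(0))$ otherwise.
   Context: Standing setup. Fix $n\in\mathbb N$ and $W=[w_{ij}]\in\mathbb R^{n\times n}$ with $w_{ij}\ge0$, $w_{ii}=0$. Let $\|W\|_\infty=\max_i\sum_j|w_{ij}|$, $\|W\|_1=\max_j\sum_i|w_{ij}|$, let $\lambda$ be the spectral radius of $W$, and assume there is $c\in\mathbb R^n$ with all entries positive and $W^\top c=\lambda c$. Fix $\beta\ge\gamma\ge0$ with $1-\max\{\|W\|_\infty,\|W\|_1\}>\max\{2\beta,4\gamma\}$. Fix innate opinions $s\in[0,1]^n$, $\overline s=\max_is_i$, $\underline s=\min_is_i$; Georgia chooses $g\in[0,\underline s]$, Hank chooses $h\in[\overline s,1]$. Set $\widehat c_i=c_i/\sum_jc_j$, $\widehat s=\sum_i\widehat c_is_i$, $\chi=\sum_i\widehat c_is_i\sum_jw_{ij}$. Define $$f(g,h)=\frac{(1-2\beta+(h-g)\gamma)\widehat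 s-\chi+(h+g)\beta+(g^2-h^2)\gamma}{1-\lambda+(g-h)\gamma}\,c^\top\mathbf 1$$ (the centrality-weighted steady state of the opinion dynamics with source opinions $g,h$). *)

(* Scalars live in an arbitrary numClosedFieldType C
   (e.g. the complex numbers); all data of the model are real elements of C. *)
From HB Require Import structures.
From mathcomp Require Import all_boot all_order all_algebra.
Set Implicit Arguments. Unset Strict Implicit. Unset Printing Implicit Defensive.
Import Order.TTheory GRing.Theory Num.Theory.
Local Open Scope ring_scope.

Section Defs.
Variables (C : numClosedFieldType) (n : nat).

(* ||W||_inf = max_i sum_j |w_ij|  (entries nonnegative so 0 is a safe base) *)
Definition norm_inf (W : 'M[C]_n) : C :=
  \big[Num.max/0]_(i < n) \sum_(j < n) `|W i j|.
Definition norm_one (W : 'M[C]_n) : C :=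
  \big[Num.max/0]_(j < n) \sum_(i < n) `|W i j|.

Definition is_spectral_radius (A : 'M[C]_n) (r : C) : Prop :=
  (exists2 mu, eigenvalue A mu & `|mu| = r) /\
  (forall mu, eigenvalue A mu -> `|mu| <= r).

Definition chat (c : 'cV[C]_n) (i : 'I_n) : C := c i 0 / \sum_(j < n) c j 0.
Definition shat (c s : 'cV[C]_n) : C := \sum_(i < n) chat c i * s i 0.
Definition chi (W : 'M[C]_n) (c s : 'cV[C]_n) : C :=
  \sum_(i < n) chat c i * s i 0 * \sum_(j < n) W i j.

Definition fval (W : 'M[C]_n) (lam beta gamma : C) (c s : 'cV[C]_n)
    (g h : C) : C :=
  ((1 - 2 * beta + (h - g) * gamma) * shat c s - chi W c s + (h + g) * beta
     + (g ^+ 2 - h ^+ 2) * gamma)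
  / (1 - lam + (g - h) * gamma) * \sum_(i < n) c i 0.

Definition georgia_strat (s : 'cV[C]_n) (g : C) : Prop :=
  0 <= g /\ forall i, g <= s i 0.
Definition hank_strat (s : 'cV[C]_n) (h : C) : Prop :=
  (forall i, s i 0 <= h) /\ h <= 1.
End Defs.

Definition is_nash_zero_sum (C : numClosedFieldType) (G H : C -> Prop)
    (F : C -> C -> C) (g h : C) : Prop :=
  [/\ G g, H h,
      (forall g', G g' -> F g h <= F g' h) &
      (forall h', H h' -> F g h' <= F g h)].

From HB Require Import structures.
From mathcomp Require Import all_boot all_order all_algebra.
From mathcomp Require Import ring.
Import Order.TTheory GRing.Theory Num.Theory.
Local Open Scope ring_scope.

(* When every innate opinion is 0 we get chi = shat = 0, so
   Georgia's only strategy is g = 0 and, writing a := 1 - lam and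
   S := sum_i c_i > 0,
        f(0, h) = S * P(h),   P(h) := (beta h - gamma h^2) / (a - gamma h).
   The theorem is thus a statement about the unique maximiser of the
   one-variable rational function P on [0, 1]:
   - the difference P(x) - P(y) factors as (x - y) * D(x, y) / positive;
   - if q := gamma^2 + (beta - 2 gamma) a >= 0 then D(1, h) >= 0, so the
     maximum is at h = 1;
   - otherwise t := (a - sqrt(a (a - beta))) / gamma lies in [0, 1] and
     P(t) - P(h) is a square divided by a positive number.
   The hypotheses on the norms of W enter only through a > 2 beta and
   a > 4 gamma, which follow from the bound lam <= ||W||_inf obtained by
   weighting the row sums of W with the positive left eigenvector c.
   Finally q00 = beta a > 0, so the case h = 0 of the statement never fires,
   and a zero-sum game in which one player has a single strategy has as Nash
   equilibria exactly the maximisers of the other player's payoff. *)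

Lemma le_strict_of_gap (R : numDomainType) (x y : R) (P : Prop) :
  0 <= x - y -> (x - y = 0 -> P) -> y <= x /\ (x <= y -> P).
Proof.
move=> gap_ge0 gap0; split; first by rewrite -subr_ge0.
by move=> le_xy; apply: gap0; apply/eqP; rewrite eq_le subr_le0 le_xy.
Qed.

Section Payoff.
Variables (C : numClosedFieldType) (a b g : C).

(* Hank's payoff against g = 0 when all innate opinions vanish, divided by
   the total centrality. *)
Definition payoff (h : C) : C := (b * h - g * h ^+ 2) / (a - g * h).

Lemma payoff_sub x y : a - g * x != 0 -> a - g * y != 0 ->
  payoff x - payoff y =
  (x - y) * ((a - g * x) * (a - g * y) - a * (a - b))
    / ((a - g * x) * (a - g * y)).
Proof. by move=> nz_x nz_y; rewrite /payoff; field; rewrite nz_x nz_y. Qed.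

(* The sign of slope_at_one decides whether the payoff is still increasing
   at h = 1; payoff_root is the interior critical point. *)
Definition slope_at_one : C := g * g + (b - 2 * g) * a.
Definition payoff_root : C := (a - sqrtC (a * (a - b))) / g.
Definition payoff_argmax : C := if 0 <= slope_at_one then 1 else payoff_root.

Hypotheses (g_gt0 : 0 < g) (g_le_b : g <= b)
  (a_gt_2b : 2 * b < a) (a_gt_4g : 4 * g < a).

Let b_gt0 : 0 < b. Proof. exact: lt_le_trans g_le_b. Qed.

Let a_sub_b_gt0 : 0 < a - b.
Proof.
have -> : a - b = (a - 2 * b) + b by ring.
by rewrite addr_gt0 // subr_gt0.
Qed.

Let a_gt0 : 0 < a.
Proof. by rewrite -(subrK b a) addr_gt0. Qed.

Let sqrt_gt0 : 0 < sqrtC (a * (a - b)).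
Proof. by rewrite sqrtC_gt0 mulr_gt0. Qed.

Let sqrt_sq : sqrtC (a * (a - b)) ^+ 2 = a * (a - b).
Proof. exact: sqrtCK. Qed.

Lemma payoff_denom_gt0 [h] : h <= 1 -> 0 < a - g * h.
Proof.
move=> h_le1; have -> : a - g * h = (a - 4 * g) + g * (3 + (1 - h)) by ring.
apply: ltr_wpDr; last by rewrite subr_gt0.
by apply: mulr_ge0; [exact: ltW | rewrite addr_ge0 // subr_ge0].
Qed.

Lemma payoff_max_at_one h : 0 <= slope_at_one -> 0 <= h -> h <= 1 ->
  payoff h <= payoff 1 /\ (payoff 1 <= payoff h -> h = 1).
Proof.
move=> q_ge0 h_ge0 h_le1.
have d1 := payoff_denom_gt0 (lexx 1); have dh := payoff_denom_gt0 h_le1.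
have split_D : (a - g * 1) * (a - g * h) - a * (a - b) =
               (a - g * 1) * (g * (1 - h)) + slope_at_one.
  by rewrite /slope_at_one; ring.
have A_ge0 : 0 <= (a - g * 1) * (g * (1 - h)).
  by rewrite !mulr_ge0 ?(ltW g_gt0) ?(ltW d1) // subr_ge0.
apply: le_strict_of_gap; rewrite payoff_sub ?gt_eqF // split_D.
  apply: divr_ge0; last exact: mulr_ge0 (ltW d1) (ltW dh).
  by apply: mulr_ge0; [rewrite subr_ge0 | apply: addr_ge0].
move/eqP; rewrite mulf_eq0 invr_eq0 (gt_eqF (mulr_gt0 d1 dh)) orbF mulf_eq0.
rewrite subr_eq0; case/orP=> [/eqP -> //|]; rewrite paddr_eq0 // => /andP[+ _].
by rewrite !mulf_eq0 (gt_eqF d1) (gt_eqF g_gt0) subr_eq0 => /eqP ->.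
Qed.

(* If q < 0, the critical point lies in [0, 1]: both bounds follow by
   rationalising a - sqrt(a (a - b)) and sqrt(a (a - b)) - (a - g). *)
Lemma payoff_root_in_unit : slope_at_one < 0 ->
  0 <= payoff_root /\ payoff_root <= 1.
Proof.
move=> q_lt0; have sK_gt0 := sqrt_gt0; have sK_sq := sqrt_sq.
set sK := sqrtC (a * (a - b)) in sK_gt0 sK_sq *.
have ag_gt0 : 0 < a - g by have := payoff_denom_gt0 (lexx 1); rewrite mulr1.
have low : a - sK = a * b / (a + sK).
  have nz := lt0r_neq0 (addr_gt0 a_gt0 sK_gt0).
  apply: (mulIf nz); rewrite mulfVK //.
  have -> : (a - sK) * (a + sK) = a ^+ 2 - sK ^+ 2 by ring.
  by rewrite sK_sq; ring.
have up : sK - (a - g) = - slope_at_one / (sK + (a - g)).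
  have nz := lt0r_neq0 (addr_gt0 sK_gt0 ag_gt0).
  apply: (mulIf nz); rewrite mulfVK //.
  have -> : (sK - (a - g)) * (sK + (a - g)) = sK ^+ 2 - (a - g) ^+ 2 by ring.
  by rewrite sK_sq /slope_at_one; ring.
split; rewrite /payoff_root -/sK.
  rewrite low; apply: divr_ge0 (ltW g_gt0); apply: divr_ge0.
    exact: mulr_ge0 (ltW a_gt0) (ltW b_gt0).
  exact: ltW (addr_gt0 a_gt0 sK_gt0).
rewrite -subr_ge0 (_ : 1 - _ = (sK - (a - g)) / g); last first.
  by field; rewrite gt_eqF.
rewrite up; apply: divr_ge0 (ltW g_gt0); apply: divr_ge0.
  by rewrite oppr_ge0 ltW.
exact: ltW (addr_gt0 sK_gt0 ag_gt0).
Qed.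

Lemma payoff_denom_at_root : a - g * payoff_root = sqrtC (a * (a - b)).
Proof. by rewrite /payoff_root; field; rewrite gt_eqF. Qed.

Lemma payoff_gap_at_root h : h <= 1 ->
  payoff payoff_root - payoff h =
  (a - g * h - sqrtC (a * (a - b))) ^+ 2 / (g * (a - g * h)).
Proof.
move=> h_le1; have dh := payoff_denom_gt0 h_le1.
rewrite payoff_sub ?payoff_denom_at_root ?gt_eqF //.
have -> : payoff_root - h = ((a - g * h) - (a - g * payoff_root)) / g.
  by field; rewrite gt_eqF.
rewrite payoff_denom_at_root; move: sqrt_sq sqrt_gt0.
by move: (sqrtC _) => sK sK_sq sK_gt0; rewrite -sK_sq; field; rewrite !gt_eqF.
Qed.

Lemma payoff_max_at_root h : h <= 1 ->
  payoff h <= payoff payoff_root /\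
  (payoff payoff_root <= payoff h -> h = payoff_root).
Proof.
move=> h_le1; have dh := payoff_denom_gt0 h_le1.
have sq_real : a - g * h - sqrtC (a * (a - b)) \is Num.real.
  apply: realB _ (gtr0_real sqrt_gt0); apply: realB (gtr0_real a_gt0) _.
  exact: realM (gtr0_real g_gt0) (ler1_real h_le1).
apply: le_strict_of_gap; rewrite payoff_gap_at_root //.
  by apply: divr_ge0; [rewrite -realEsqr | exact: ltW (mulr_gt0 g_gt0 dh)].
move/eqP; rewrite mulf_eq0 invr_eq0 (gt_eqF (mulr_gt0 g_gt0 dh)) orbF.
rewrite expf_eq0 /= subr_eq0 -payoff_denom_at_root => /eqP eq_denom.
by apply: (mulfI (lt0r_neq0 g_gt0)); apply: oppr_inj; apply: (addrI a).
Qed.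

Lemma payoff_argmaxP :
  [/\ 0 <= payoff_argmax, payoff_argmax <= 1 &
      forall h, 0 <= h -> h <= 1 ->
        payoff h <= payoff payoff_argmax /\
        (payoff payoff_argmax <= payoff h -> h = payoff_argmax)].
Proof.
rewrite /payoff_argmax; case: ifP => [q_ge0|q_lt0].
  by split=> // h h_ge0 h_le1; apply: payoff_max_at_one.
have q_real : slope_at_one \is Num.real.
  by rewrite /slope_at_one rpredD ?rpredM ?rpredB ?gtr0_real ?mulr_gt0 ?ltr0n.
have [root_ge0 root_le1] : 0 <= payoff_root /\ payoff_root <= 1.
  by apply: payoff_root_in_unit; rewrite real_ltNge ?q_lt0.
by split=> // h _ h_le1; apply: payoff_max_at_root.
Qed.

End Payoff.

Arguments payoff {C} a b g h.
Arguments payoff_argmax {C} a b g.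
Arguments payoff_argmaxP {C a b g}.

Lemma nash_single_strategy (C : numClosedFieldType) (G H : C -> Prop)
    (F : C -> C -> C) (t : C) :
  (forall g, G g <-> g = 0) -> H t ->
  (forall h, H h -> F 0 h <= F 0 t /\ (F 0 t <= F 0 h -> h = t)) ->
  forall g h, is_nash_zero_sum G H F g h <-> g = 0 /\ h = t.
Proof.
move=> G0 Ht t_max g h; split.
  by case=> /G0 -> Hh _ /(_ t Ht) /(proj2 (t_max h Hh)).
case=> -> ->; split=> //; first exact/G0.
  by move=> g' /G0 ->.
by move=> h' /t_max [].
Qed.

Lemma real_le_bigmax (R : numDomainType) (I : eqType) (r : seq I)
    (F : I -> R) (x0 : R) (i : I) :
  x0 \is Num.real -> (forall j, F j \is Num.real) -> i \in r ->
  F i <= \big[Num.max/x0]_(j <- r) F j.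
Proof.
move=> x0_real F_real; elim: r => // x r IH; rewrite big_cons inE.
have cmp : F x >=< \big[Num.max/x0]_(j <- r) F j.
  by apply: real_comparable; rewrite ?bigmax_real.
by case/orP=> [/eqP ->|/IH le_i]; rewrite comparable_le_max ?lexx ?le_i ?orbT.
Qed.

Lemma centrality_sum_gt0 {C : numClosedFieldType} {n : nat} (c : 'cV[C]_n) :
  (0 < n)%N -> (forall i, 0 < c i 0) -> 0 < \sum_(i < n) c i 0.
Proof.
move=> n_gt0 c_gt0; rewrite (bigD1 (Ordinal n_gt0)) //= ltr_pwDl ?c_gt0 //.
by apply: sumr_ge0 => i _; apply: ltW.
Qed.

Section MatrixBounds.
Variables (C : numClosedFieldType) (n : nat) (W : 'M[C]_n).
Hypothesis W_ge0 : forall i j, 0 <= W i j.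

Let abs_sum_real (F : 'I_n -> C) : \sum_(j < n) `|F j| \is Num.real.
Proof. by apply: ger0_real; apply: sumr_ge0. Qed.

Lemma norm_inf_real : norm_inf W \is Num.real.
Proof. by apply: bigmax_real. Qed.

Lemma norm_one_real : norm_one W \is Num.real.
Proof. by apply: bigmax_real => // j _; apply: abs_sum_real (W^~ j). Qed.

Lemma row_sum_le_norm_inf k : \sum_(j < n) W k j <= norm_inf W.
Proof.
rewrite (eq_bigr (fun j => `|W k j|)) => [|j _]; last by rewrite ger0_norm.
by apply: real_le_bigmax (mem_index_enum _) => // i; apply: abs_sum_real.
Qed.

(* An eigenvalue with a positive left eigenvector is at most ||W||_inf:
   weight the row sums of W by the eigenvector. *)
Lemma left_eigenvalue_le_norm_inf (lam : C) (c : 'cV[C]_n) :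
  (0 < n)%N -> (forall i, 0 < c i 0) -> W^T *m c = lam *: c ->
  lam <= norm_inf W.
Proof.
move=> n_gt0 c_gt0 Wc; set S := \sum_(i < n) c i 0.
have S_gt0 : 0 < S := centrality_sum_gt0 c n_gt0 c_gt0.
have weighted : lam * S = \sum_(k < n) c k 0 * \sum_(j < n) W k j.
  rewrite /S mulr_sumr (eq_bigr (fun j => \sum_(k < n) W k j * c k 0)).
    by rewrite exchange_big; apply: eq_bigr => k _; rewrite mulr_sumr;
       apply: eq_bigr => j _; rewrite mulrC.
  move=> j _; have := congr1 (fun M : 'cV[C]_n => M j 0) Wc.
  by rewrite /= !mxE => <-; apply: eq_bigr => k _; rewrite !mxE.
rewrite -(ler_pM2r S_gt0) weighted /S mulr_sumr; apply: ler_sum => k _.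
by rewrite mulrC; apply: ler_wpM2r; [exact: ltW | exact: row_sum_le_norm_inf].
Qed.

End MatrixBounds.

(* The smallness hypothesis on W turns into bounds on a = 1 - lam. *)
Lemma lt_sub_of_max_lt (R : numDomainType) (x y u v l : R) :
  x \is Num.real -> y \is Num.real -> u \is Num.real -> v \is Num.real ->
  l <= u -> Num.max x y < 1 - Num.max u v -> x < 1 - l /\ y < 1 - l.
Proof.
move=> xr yr ur vr l_le_u max_lt.
have sub_le : 1 - Num.max u v <= 1 - l.
  by rewrite lerD2l lerN2 comparable_le_max ?l_le_u ?real_comparable.
have bound := lt_le_trans max_lt sub_le.
by split; apply: le_lt_trans bound; rewrite comparable_le_max ?lexx ?orbT
   ?real_comparable.
Qed.

Section ZeroOpinions.
Variables (C : numClosedFieldType) (n : nat) (s : 'cV[C]_n).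
Hypothesis s0 : forall i, s i 0 = 0.

Lemma chi_zero_opinions (W : 'M[C]_n) (c : 'cV[C]_n) : chi W c s = 0.
Proof. by rewrite /chi big1 // => i _; rewrite s0 mulr0 mul0r. Qed.

Lemma shat_zero_opinions (c : 'cV[C]_n) : shat c s = 0.
Proof. by rewrite /shat big1 // => i _; rewrite s0 mulr0. Qed.

Lemma fval_zero_opinions (W : 'M[C]_n) (lam beta gamma : C) (c : 'cV[C]_n) h :
  fval W lam beta gamma c s 0 h =
  payoff (1 - lam) beta gamma h * \sum_(i < n) c i 0.
Proof.
rewrite /fval shat_zero_opinions chi_zero_opinions /payoff.
by congr (_ / _ * _); ring.
Qed.

Hypothesis n_gt0 : (0 < n)%N.

Lemma georgia_strat_zero g : georgia_strat s g <-> g = 0.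
Proof.
split=> [[g_ge0 /(_ (Ordinal n_gt0))]|->]; last by split=> // i; rewrite s0.
by rewrite s0 => g_le0; apply/le_anti; rewrite g_ge0 g_le0.
Qed.

Lemma hank_strat_zero h : hank_strat s h <-> 0 <= h /\ h <= 1.
Proof.
split=> [[/(_ (Ordinal n_gt0))]|[h_ge0 h_le1]]; first by rewrite s0.
by split=> // i; rewrite s0.
Qed.

End ZeroOpinions.

Theorem corollary4 (C : numClosedFieldType) (n : nat) (W : 'M[C]_n)
    (lam : C) (c : 'cV[C]_n) (beta gamma : C) (s : 'cV[C]_n) :
  (0 < n)%N ->
  (forall i j, 0 <= W i j) ->
  (forall i, W i i = 0) ->
  is_spectral_radius W lam ->
  (forall i, 0 < c i 0) ->
  W^T *m c = lam *: c ->
  gamma <= beta -> 0 <= gamma ->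
  Num.max (2 * beta) (4 * gamma) < 1 - Num.max (norm_inf W) (norm_one W) ->
  0 < gamma ->
  (forall i, s i 0 = 0) ->
  let F := fval W lam beta gamma c s in
  let q00 := beta - beta * lam - chi W c s * gamma in
  let q01 := (gamma - chi W c s) * gamma + (beta - 2 * gamma) * (1 - lam) in
  let r0 := (1 - lam - sqrtC ((1 - lam) * (1 - lam - beta) + chi W c s * gamma))
            / gamma in
  let h_star := if 0 <= q01 then 1 else if q00 <= 0 then 0 else r0 in
  forall g h, is_nash_zero_sum (georgia_strat s) (hank_strat s) F g h <->
              (g = 0 /\ h = h_star).
Proof.
move=> n_gt0 W_ge0 _ _ c_gt0 Wc g_le_b _ small_W g_gt0 s0 F q00 q01 r0 h_star.
have real_pos (k : nat) (x : C) : 0 < x -> k%:R * x \is Num.real.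
  by move=> x_gt0; rewrite rpredM ?rpred_nat ?gtr0_real.
have [a_gt_2b a_gt_4g] : 2 * beta < 1 - lam /\ 4 * gamma < 1 - lam.
  apply: lt_sub_of_max_lt small_W;
    rewrite ?real_pos ?norm_inf_real ?norm_one_real ?(lt_le_trans g_gt0) //.
  exact: left_eigenvalue_le_norm_inf.
have h_star_argmax : h_star = payoff_argmax (1 - lam) beta gamma.
  have q00_gt0 : 0 < q00.
    rewrite /q00 chi_zero_opinions // mul0r subr0 -[X in X - _]mulr1 -mulrBr.
    have b_gt0 : 0 < beta := lt_le_trans g_gt0 g_le_b.
    by rewrite mulr_gt0 // (lt_trans _ a_gt_2b) // mulr_gt0.
  rewrite /h_star /q01 /r0 (lt_geF q00_gt0) chi_zero_opinions //.
  by rewrite !subr0 mul0r addr0.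
have [t_ge0 t_le1 t_max] := payoff_argmaxP g_gt0 g_le_b a_gt_2b a_gt_4g.
have S_gt0 := centrality_sum_gt0 c n_gt0 c_gt0.
rewrite h_star_argmax; apply: nash_single_strategy.
- exact: georgia_strat_zero.
- exact/hank_strat_zero.
- move=> h /hank_strat_zero [] // h_ge0 h_le1.
  by rewrite /F !fval_zero_opinions // !ler_pM2r //; apply: t_max.
Qed.
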